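(* Let $\phi$ be a constant Drinfeld $A[\underline{t}_s]$-module of rank $r\ge1$, i.e. $\phi_\theta=\theta+A_1\tau+\dots+A_r\tau^r$ with all $A_i\in\mathbb{C}_\infty$, $A_r\neq0$, and suppose $\lambda_1,\dots,\lambda_r\in\mathbb{C}_\infty$ form an $A$-basis of the kernel of $\exp_\phi:\mathbb{C}_\infty\to\mathbb{C}_\infty$ (the period lattice of $\phi$ viewed as a Drinfeld $A$-module over $\mathbb{C}_\infty$). Then $\lambda_1,\dots,\lambda_r$ form an $A[\underline{t}_s]$-basis of $\Lambda_\phi=\ker(\exp_\phi:\mathbb{T}_s\to\mathbb{T}_s)$.
   Context: $\mathbb{F}_q$ finite field, $\theta,t_1,\dots,t_s$ independent variables, $A=\mathbb{F}_q[\theta]$, $A[\underline{t}_s]=\mathbb{F}_q[\theta,t_1,\dots,t_s]$, $\mathbb{F}_q[\underline{t}_s]=\mathbb{F}_q[t_1,\dots,t_s]$. $\mathbb{C}_\infty$: completion of an algebraic closure of $\mathbb{F}_q((1/\theta))$. $\mathbb{T}_s$: Tate algebra of power series in $t_1,\dots,t_s$ over $\mathbb{C}_\infty$ with coefficients tending to $0$. $\tau$ raises $\mathbb{C}_\infty$-coefficients to the $q$-th power; $\mathbb{T}_s[\tau]$, $\mathbb{T}_s[[\tau]]$ are twisted rings with $\tau f=f^{(1)}\tau$, acting by $\sum a_i\tau^i(f)=\sum a_if^{(i)}$. A Drinfeld $A[\underline{t}_s]$-module is an $\mathbb{F}_q[\underline{t}_s]$-algebra homomorphism $\phi:A[\underline{t}_s]\to\mathbb{T}_s[\tau]$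 with $\phi_\theta=\theta+A_1\tau+\dots+A_r\tau^r$. $\exp_\phi=\sum\alpha_i\tau^i$ is the unique series with $\alpha_0=1$, $\exp_\phi a=\phi_a\exp_\phi$; for constant $\phi$ its coefficients lie in $\mathbb{C}_\infty$ and it converges on $\mathbb{C}_\infty$ and on $\mathbb{T}_s$. *)

From HB Require Import structures.
From mathcomp Require Import all_boot all_order all_algebra all_field.
From mathcomp Require Import reals.
From mathcomp Require Import mpoly.
Set Implicit Arguments. Unset Strict Implicit. Unset Printing Implicit Defensive.
Import Order.TTheory GRing.Theory Num.Theory.
Local Open Scope ring_scope.

Section Cinfty.
(* F = F_q (q = #|F|), C = C_oo, iota : F -> C the structure map,
   theta : C the variable, nu : C -> R the absolute value of C_oo. *)
Variables (F : finFieldType) (C : closedFieldType) (iota : {rmorphism F -> C})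
  (theta : C) (R : realType) (nu : C -> R).

Definition qq : nat := #|F|.

Definition evA (a : {poly F}) : C := (map_poly iota a).[theta].

Definition cvgC (u : nat -> C) (l : C) : Prop :=
  forall eps : R, 0 < eps -> exists N : nat, forall n, (N <= n)%N -> nu (l - u n) < eps.
Definition cauchyC (u : nat -> C) : Prop :=
  forall eps : R, 0 < eps -> exists N : nat,
    forall m n, (N <= m)%N -> (N <= n)%N -> nu (u m - u n) < eps.

Definition algebraic_over_Ftheta (y : C) : Prop :=
  exists P : {poly {poly F}}, P != 0 /\ (map_poly evA P).[y] = 0.

(* (C, nu, theta) is (a model of) C_oo: the completion of an algebraic closure
   of F_q((1/theta)), characterised up to isometric isomorphism as a complete,
   algebraically closed field with a non-archimedean absolute value extending the
   (1/theta)-adic one of F_q(theta) (|theta| = q), in which the algebraic closure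
   of F_q(theta) is dense. *)
Definition is_Cinfty : Prop :=
  [/\ [/\ (forall x, 0 <= nu x),
          (forall x, (nu x == 0) = (x == 0)),
          (forall x y, nu (x * y) = nu x * nu y) &
          (forall x y, nu (x + y) <= Num.max (nu x) (nu y))],
      nu theta = (qq%:R : R),
      (forall u, cauchyC u -> exists l, cvgC u l) &
      (forall x (eps : R), 0 < eps -> exists y, algebraic_over_Ftheta y /\ nu (x - y) < eps)].

(* Twisted (Frobenius-skew) product of coefficient sequences in C[[tau]]:
   (sum a_i tau^i)(sum b_j tau^j) = sum_n (sum_{i+j=n} a_i b_j^(q^i)) tau^n. *)
Definition twmul (a b : nat -> C) : nat -> C :=
  fun n => \sum_(i < n.+1) a i * b (n - i)%N ^+ (qq ^ i).

Definition phi_theta (r : nat) (Acoef : nat -> C) : nat -> C :=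
  fun n => if n == 0%N then theta else if (n <= r)%N then Acoef n else 0.

Definition constS (c : C) : nat -> C := fun n => if n == 0%N then c else 0.

(* alpha is the coefficient sequence of exp_phi: alpha_0 = 1 and
   exp_phi theta = phi_theta exp_phi in C[[tau]]. *)
Definition is_exp_coeffs (r : nat) (Acoef : nat -> C) (alpha : nat -> C) : Prop :=
  alpha 0%N = 1 /\
  forall n, twmul alpha (constS theta) n = twmul (phi_theta r Acoef) alpha n.

Definition kerC (alpha : nat -> C) (x : C) : Prop :=
  cvgC (fun n => \sum_(i < n) alpha i * x ^+ (qq ^ i)) 0.

Definition A_basis (r : nat) (M : C -> Prop) (lam : 'I_r -> C) : Prop :=
  [/\ (forall i, M (lam i)),
      (forall x, M x -> exists c : 'I_r -> {poly F}, x = \sum_(i < r) evA (c i) * lam i) &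
      (forall c : 'I_r -> {poly F}, \sum_(i < r) evA (c i) * lam i = 0 -> forall i, c i = 0)].

(* ---- Tate algebra T_s : series sum_m f_m t^m, m in 'X_{1..s}, f_m -> 0. ---- *)
Definition tate (s : nat) (f : 'X_{1..s} -> C) : Prop :=
  forall eps : R, 0 < eps -> exists N : nat, forall m, (N <= mdeg m)%N -> nu (f m) < eps.

(* Convergence in T_s for the Gauss norm ||f|| = sup_m nu (f m). *)
Definition cvgT (s : nat) (u : nat -> 'X_{1..s} -> C) (l : 'X_{1..s} -> C) : Prop :=
  forall eps : R, 0 < eps -> exists N : nat, forall n, (N <= n)%N ->
    forall m, nu (l m - u n m) < eps.

(* tau^i acting on T_s: raise the C-coefficients to the q^i-th power. *)
Definition frobT (s : nat) (i : nat) (f : 'X_{1..s} -> C) : 'X_{1..s} -> C :=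
  fun m => f m ^+ (qq ^ i).

Definition expT_partial (s : nat) (alpha : nat -> C) (f : 'X_{1..s} -> C)
  : nat -> 'X_{1..s} -> C :=
  fun n m => \sum_(i < n) alpha i * frobT i f m.

Definition LambdaT (s : nat) (alpha : nat -> C) (f : 'X_{1..s} -> C) : Prop :=
  tate f /\ cvgT (expT_partial alpha f) (fun _ => 0).

Definition constT (s : nat) (x : C) : 'X_{1..s} -> C :=
  fun m => if m == 0%MM then x else 0.

Definition actT (s : nat) (a : {mpoly {poly F}[s]}) (f : 'X_{1..s} -> C)
  : 'X_{1..s} -> C :=
  fun n => \sum_(m <- msupp a | (m <= n)%MM) evA (a@_m) * f (n - m)%MM.

Definition sumT (s r : nat) (g : 'I_r -> 'X_{1..s} -> C) : 'X_{1..s} -> C :=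
  fun m => \sum_(i < r) g i m.

Definition At_basis (s r : nat) (M : ('X_{1..s} -> C) -> Prop)
  (b : 'I_r -> 'X_{1..s} -> C) : Prop :=
  [/\ (forall i, M (b i)),
      (forall f, M f -> exists c : 'I_r -> {mpoly {poly F}[s]},
          f = sumT (fun i => actT (c i) (b i))) &
      (forall c : 'I_r -> {mpoly {poly F}[s]},
          sumT (fun i => actT (c i) (b i)) = (fun _ => 0) -> forall i, c i = 0)].

End Cinfty.

From mathcomp Require Import all_boot all_order all_algebra all_field.
From mathcomp Require Import reals.
From mathcomp Require Import mpoly.
From mathcomp Require Import lra.
From Stdlib Require Import ClassicalEpsilon FunctionalExtensionality.
Import Order.TTheory GRing.Theory Num.Theory.
Local Open Scope ring_scope.
Set Implicit Arguments. Unset Strict Implicit.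

(* Since tau fixes the t_j, exp_phi acts on f = sum_m f_m t^m coefficientwise:
   f lies in Lambda_phi iff f_m -> 0 and every f_m lies in the period lattice
   Lambda of phi over C_oo.  Lambda is discrete: if a <> 0 is a period, the terms
   alpha_i a^(q^i) of exp_phi(a) are bounded by some K, and for
   0 < |x| < min(|a|, |a|^2 / K) every term alpha_i x^(q^i) with i >= 1 is
   smaller than |x|, so |exp_phi(x)| = |x| <> 0.  Hence f_m = 0 for all but
   finitely many m: f is a polynomial in t with coefficients in
   Lambda = A lambda_1 + ... + A lambda_r, i.e. f lies in the A[t]-span of the
   lambda_i.  Their A[t]-independence is A-independence coefficientwise. *)

Definition nonarchimedean_abs (C : nzRingType) (R : realType) (nu : C -> R) :=
  [/\ (forall x, 0 <= nu x), (forall x, (nu x == 0) = (x == 0)),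
      (forall x y, nu (x * y) = nu x * nu y) &
      (forall x y, nu (x + y) <= Num.max (nu x) (nu y))].

Section NonarchimedeanAbs.
Variables (C : nzRingType) (R : realType) (nu : C -> R).
Hypothesis nu_abs : nonarchimedean_abs nu.

Lemma nu_ge0 x : 0 <= nu x. Proof. by case: nu_abs. Qed.
Lemma nu_eq0 x : (nu x == 0) = (x == 0). Proof. by case: nu_abs. Qed.
Lemma nuM x y : nu (x * y) = nu x * nu y. Proof. by case: nu_abs. Qed.
Lemma nuD x y : nu (x + y) <= Num.max (nu x) (nu y). Proof. by case: nu_abs. Qed.

Lemma nu0 : nu 0 = 0. Proof. by apply/eqP; rewrite nu_eq0. Qed.

Lemma nu_gt0 x : x != 0 -> 0 < nu x.
Proof. by move=> x0; rewrite lt_def nu_eq0 x0 nu_ge0. Qed.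

Lemma nu1 : nu 1 = 1.
Proof.
have h : nu 1 * nu 1 = nu 1 * 1 by rewrite -nuM !mulr1.
by apply: mulfI h; rewrite gt_eqF // nu_gt0 ?oner_neq0.
Qed.

Lemma nuN x : nu (- x) = nu x.
Proof.
rewrite -mulN1r nuM.
have h : nu (-1) * nu (-1) = 1 by rewrite -nuM mulrNN mulr1 nu1.
have h0 := nu_ge0 (-1).
have -> : nu (-1) = 1 by nra.
by rewrite mul1r.
Qed.

Lemma nuX x k : nu (x ^+ k) = nu x ^+ k.
Proof. by elim: k => [|k IH]; rewrite ?expr0 ?nu1 // !exprS nuM IH. Qed.

Lemma nuB x y : nu (x - y) <= Num.max (nu x) (nu y).
Proof. by rewrite -(nuN y); apply: nuD. Qed.

Lemma nu_sum_lt n (G : 'I_n -> C) t : 0 < t -> (forall i, nu (G i) < t) ->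
  nu (\sum_(i < n) G i) < t.
Proof.
move=> t_gt0 G_lt; apply: (big_ind (fun y => nu y < t)); rewrite ?nu0 //.
by move=> y z hy hz; apply: le_lt_trans (nuD _ _) _; rewrite gt_max hy hz.
Qed.

Lemma nuDr_eq a b : nu b < nu a -> nu (a + b) = nu a.
Proof.
move=> ba; apply/eqP; rewrite eq_le.
have := nuD a b; rewrite max_l ?(ltW ba) // => -> /=.
have := nuD (a + b) (- b); rewrite addrK nuN le_max => /orP[//|].
by rewrite leNgt ba.
Qed.

Section SmallArguments.
Variables (q : nat) (alpha : nat -> C) (K : R) (a : C).
Hypotheses (q_gt1 : (1 < q)%N) (K_gt0 : 0 < K)
  (alpha_bounded : forall i, nu (alpha i) * nu a ^+ (q ^ i) <= K).

Lemma nu_exp_term_lt x i : x != 0 -> nu x < nu a -> nu x < nu a ^+ 2 / K ->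
  (0 < i)%N -> nu (alpha i * x ^+ (q ^ i)) < nu x.
Proof.
move=> x0 xa xK i_gt0.
set t := nu x; set rho := nu a; set u := t / rho.
have t_gt0 : 0 < t := nu_gt0 x0.
have rho_gt0 : 0 < rho := lt_trans t_gt0 xa.
have u_gt0 : 0 < u by rewrite divr_gt0.
have u_le1 : u <= 1 by rewrite ler_pdivrMr // mul1r ltW.
have t_eq : t = rho * u by rewrite /u mulrC divfK // gt_eqF.
have Ku_lt : K * u < rho.
  by rewrite /u mulrA ltr_pdivrMr // mulrC -expr2 -ltr_pdivlMr.
have qi_ge2 : (2 <= q ^ i)%N.
  by apply: leq_trans q_gt1 _; rewrite -{1}(expn1 q) leq_pexp2l // ltnW.
rewrite nuM nuX -/t t_eq exprMn mulrA.
apply: (@le_lt_trans _ _ (K * u ^+ 2)).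
  apply: ler_pM; rewrite ?mulr_ge0 ?exprn_ge0 ?nu_ge0 ?(ltW u_gt0) ?alpha_bounded //.
  exact: ler_wiXn2l (ltW u_gt0) u_le1 _ _ qi_ge2.
by rewrite expr2 mulrA ltr_pM2r.
Qed.

Hypothesis alpha0 : alpha 0%N = 1.

Lemma nu_exp_partial_eq x n : x != 0 -> nu x < nu a -> nu x < nu a ^+ 2 / K ->
  nu (\sum_(i < n.+1) alpha i * x ^+ (q ^ i)) = nu x.
Proof.
move=> x0 xa xK; rewrite big_ord_recl /= expn0 expr1 alpha0 mul1r.
apply: nuDr_eq; apply: nu_sum_lt => [|i]; first exact: nu_gt0.
exact: nu_exp_term_lt.
Qed.

End SmallArguments.
End NonarchimedeanAbs.

Lemma qq_gt1 (F : finFieldType) : (1 < qq F)%N.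
Proof. by apply/card_gt1P; exists 0, 1; rewrite eq_sym oner_eq0. Qed.

Section PeriodLattice.
Variables (F : finFieldType) (C : closedFieldType) (R : realType) (nu : C -> R).
Hypothesis nu_abs : nonarchimedean_abs nu.

Lemma series_terms_bounded (b : nat -> C) :
  cvgC nu (fun n => \sum_(i < n) b i) 0 -> exists2 K, 0 < K & forall i, nu (b i) <= K.
Proof.
move=> /(_ 1 ltr01)[N sum_small].
have partial_ge0 : 0 <= \sum_(i < N) nu (b i).
  by apply: sumr_ge0 => i _; apply: nu_ge0 nu_abs _.
exists (1 + \sum_(i < N) nu (b i)); first lra.
move=> i; have [iN | Ni] := ltnP i N.
  have : nu (b i) <= \sum_(i < N) nu (b i).
    rewrite (bigD1 (Ordinal iN)) //= lerDl sumr_ge0 // => j _.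
    exact: (nu_ge0 nu_abs).
  lra.
have bi_lt1 : nu (b i) < 1.
  have -> : b i = \sum_(j < i.+1) b j - \sum_(j < i) b j.
    by rewrite big_ord_recr /= addrC addrK.
  have := sum_small i.+1 (leqW Ni); have := sum_small i Ni.
  rewrite !sub0r !(nuN nu_abs) => h1 h2.
  by apply: le_lt_trans (nuB nu_abs _ _) _; rewrite gt_max h1 h2.
lra.
Qed.

Variable alpha : nat -> C.
Hypothesis alpha0 : alpha 0%N = 1.

Lemma kerC_discrete a : a != 0 -> kerC F nu alpha a ->
  exists2 delta, 0 < delta & forall x, kerC F nu alpha x -> nu x < delta -> x = 0.
Proof.
move=> a0 a_ker.
have [K K_gt0 term_bounded] :=
  @series_terms_bounded (fun i => alpha i * a ^+ (qq F ^ i)) a_ker.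
have alpha_bounded i : nu (alpha i) * nu a ^+ (qq F ^ i) <= K.
  by rewrite -(nuX nu_abs) -(nuM nu_abs).
exists (Num.min (nu a) (nu a ^+ 2 / K)).
  by rewrite lt_min (nu_gt0 nu_abs) // divr_gt0 ?exprn_gt0 ?(nu_gt0 nu_abs).
move=> x x_ker; rewrite lt_min => /andP[xa xK]; apply/eqP/negPn/negP => x0.
have [N partial_small] := x_ker (nu x) (nu_gt0 nu_abs x0).
have := partial_small N.+1 (leqnSn N); rewrite sub0r (nuN nu_abs).
by rewrite (nu_exp_partial_eq nu_abs (qq_gt1 F) K_gt0 alpha_bounded) ?ltxx.
Qed.

End PeriodLattice.

Lemma mcoeff_mpoly_bounded (R : nzRingType) (s N : nat) (E : 'X_{1..s} -> R) n :
  (\sum_(m : 'X_{1..s < N}) E m *: 'X_[m])@_n = if (mdeg n < N)%N then E n else 0.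
Proof.
case: ltnP => [|Nn]; first exact: mcoeff_mpoly.
rewrite raddf_sum big1 // => m _ /=; rewrite mcoeffZ mcoeffX.
case: eqP => [mn | _]; last by rewrite mulr0.
by rewrite -mn leqNgt bmdeg in Nn.
Qed.

Section ConstantCoefficients.
Variables (F : finFieldType) (C : closedFieldType).
Variables (iota : {rmorphism F -> C}) (theta : C).

Lemma evA0 : evA iota theta 0 = 0.
Proof. by rewrite /evA map_poly0 horner0. Qed.

Lemma A_basis_neq0 r (M : C -> Prop) (lam : 'I_r -> C) :
  A_basis iota theta M lam -> forall i, lam i != 0.
Proof.
case=> _ _ lam_free i; apply/eqP => lam_i0.
have sum0 : \sum_(j < r) evA iota theta (if j == i then 1 else 0) * lam j = 0.
  rewrite (bigD1 i) //= lam_i0 mulr0 add0r big1 // => j /negbTE ->.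
  by rewrite evA0 mul0r.
by have /eqP := lam_free _ sum0 i; rewrite eqxx oner_eq0.
Qed.

Lemma actT_constT s (c : {mpoly {poly F}[s]}) x n :
  actT iota theta c (constT x) n = evA iota theta c@_n * x.
Proof.
rewrite /actT /constT big_mkcond /=.
transitivity (\sum_(m <- msupp c) (if m == n then evA iota theta c@_m * x else 0)).
  apply: eq_bigr => m _; case: (eqVneq m n) => [-> | mn].
    rewrite lepm_refl (_ : (n - n)%MM = 0%MM) ?eqxx //.
    by apply/mnmP => i; rewrite !mnmE subnn.
  case: ifP => // le_mn; case: eqP => [nm0 | _]; last by rewrite mulr0.
  by case/eqP: mn; rewrite -(submK le_mn) nm0 add0m.
rewrite -big_mkcond /= -big_filter.
have [n_supp | n_supp] := boolP (n \in msupp c).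
  by rewrite (filter_pred1_uniq (msupp_uniq c) n_supp) big_seq1.
rewrite big1_seq ?(memN_msupp_eq0 n_supp) ?evA0 ?mul0r // => m.
by rewrite /= mem_filter => /andP[/eqP ->]; rewrite (negbTE n_supp).
Qed.

Lemma sumT_actT_constT s r (c : 'I_r -> {mpoly {poly F}[s]}) (lam : 'I_r -> C) n :
  sumT (fun i => actT iota theta (c i) (constT (lam i))) n =
  \sum_(i < r) evA iota theta (c i)@_n * lam i.
Proof. by apply: eq_bigr => i _; rewrite actT_constT. Qed.

End ConstantCoefficients.

Section TateKernel.
Variables (F : finFieldType) (C : closedFieldType) (R : realType) (nu : C -> R).
Hypothesis nu_abs : nonarchimedean_abs nu.
Variables (s : nat) (alpha : nat -> C).

Lemma LambdaT_constT x : kerC F nu alpha x -> LambdaT F nu alpha (@constT C s x).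
Proof.
move=> x_ker; split=> eps eps_gt0.
  exists 1%N => m m_gt0; rewrite /constT.
  have /negbTE -> : m != 0%MM by rewrite -mdeg_eq0 -lt0n.
  by rewrite (nu0 nu_abs).
have [N partial_small] := x_ker eps eps_gt0; exists N => n Nn m.
rewrite /expT_partial /frobT /constT; case: (m == 0%MM); first exact: partial_small.
rewrite big1 ?subr0 ?(nu0 nu_abs) // => i _.
by rewrite expr0n expn_eq0 gtn_eqF ?mulr0 // ltnW // qq_gt1.
Qed.

Lemma LambdaT_coef (f : 'X_{1..s} -> C) m : LambdaT F nu alpha f -> kerC F nu alpha (f m).
Proof.
by case=> _ f_ker eps /f_ker[N partial_small]; exists N => n Nn; apply: partial_small.
Qed.

Lemma LambdaT_finite_support (delta : R) (f : 'X_{1..s} -> C) : 0 < delta ->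
  (forall x, kerC F nu alpha x -> nu x < delta -> x = 0) ->
  LambdaT F nu alpha f -> exists N, forall m, (N <= mdeg m)%N -> f m = 0.
Proof.
move=> delta_gt0 ker_small f_Lambda; have [f_tate _] := f_Lambda.
have [N f_small] := f_tate delta delta_gt0; exists N => m Nm.
exact: ker_small (LambdaT_coef m f_Lambda) (f_small m Nm).
Qed.

End TateKernel.

Theorem corollary8p3
  (F : finFieldType) (C : closedFieldType) (iota : {rmorphism F -> C})
  (theta : C) (R : realType) (nu : C -> R)
  (hC : is_Cinfty iota theta nu)
  (s r : nat) (hr : (1 <= r)%N) (Acoef : nat -> C) (hAr : Acoef r != 0)
  (alpha : nat -> C) (halpha : is_exp_coeffs F theta r Acoef alpha)
  (lam : 'I_r -> C)
  (hlam : A_basis iota theta (kerC F nu alpha) lam) :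
  At_basis iota theta (@LambdaT F C R nu s alpha) (fun i => @constT C s (lam i)).
Proof.
have [nu_abs _ _ _] := hC.
have [lam_ker lam_span lam_free] := hlam.
have [delta delta_gt0 ker_small] :=
  kerC_discrete nu_abs halpha.1 (A_basis_neq0 hlam (Ordinal hr)) (lam_ker _).
split=> [i | f f_Lambda | c c_free i].
- exact: LambdaT_constT.
- have [N f_poly] := LambdaT_finite_support delta_gt0 ker_small f_Lambda.
  have [cc f_coef] := choice _ (fun m => lam_span _ (LambdaT_coef m f_Lambda)).
  exists (fun i => \sum_(m : 'X_{1..s < N}) cc m i *: 'X_[m]).
  apply: functional_extensionality => n; rewrite sumT_actT_constT.
  under eq_bigr => i _ do rewrite (mcoeff_mpoly_bounded _ (cc^~ i)).
  case: ltnP => [_ | Nn]; first exact: f_coef.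
  by rewrite f_poly // big1 // => i _; rewrite evA0 mul0r.
- apply/mpolyP => n; rewrite mcoeff0.
  apply: (lam_free (fun i => (c i)@_n)) i.
  by rewrite -sumT_actT_constT c_free.
Qed.
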